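(* Let $M\in\mathbb{R}^{n\times n}$ be symmetric positive definite, $\delta_i,\delta_{i-1}>0$, $\epsilon\ge0$, let $\bar P:\mathbb{R}^n\to\mathbb{R}$ (control value held fixed) be differentiable and $L$-weakly convex, and let $D(\theta_i,\theta_{i-1})\in\mathbb{R}^{n\times n}$ be positive semi-definite. For $\theta_i,\theta_{i-1},\theta_{i-2}\in\mathbb{R}^n$ let $$\bar E_i(\theta_i)=\frac{1}{2\delta_i^2}\Big\|\theta_i-\big(1+\tfrac{\delta_i}{\delta_{i-1}}\big)\theta_{i-1}+\tfrac{\delta_i}{\delta_{i-1}}\theta_{i-2}\Big\|_M^2+\bar P(\theta_i),$$ $f_i^d=-D(\theta_i,\theta_{i-1})\frac{\theta_i-\theta_{i-1}}{\delta_i}$, and $\Lambda_i=\frac12\|\nabla\bar E_i(\theta_i)-f_i^d\|^2$. If $2\Lambda_i\le\epsilon^2$, then $$\Big[\tfrac12\Big\|\tfrac{\theta_i-\theta_{i-1}}{\delta_i}\Big\|_M^2+\bar P(\theta_i)\Big]-\Big[\tfrac12\Big\|\tfrac{\theta_{i-1}-\theta_{i-2}}{\delta_{i-1}}\Big\|_M^2+\bar P(\theta_{i-1})\Big]\le\frac{L\delta_i^2+\delta_i}{2\sigma_{\min}(M)}\Big\|\frac{\theta_i-\theta_{i-1}}{\delta_i}\Big\|_M^2+\frac{\delta_i\epsilon^2}{2}.$$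
   Context: $\|x\|_M^2=x^TMx$; $\sigma_{\min}(M)$ is the smallest singular value of $M$. A function $\phi$ is $L$-weakly convex if $\phi(x)+\frac L2\|x\|^2$ is convex. A matrix $D$ is positive semi-definite if $x^TDx\ge0$ for all $x$. The two bracketed quantities are discrete Hamiltonians at frames $i$ and $i-1$ evaluated with the same control value. *)

From HB Require Import structures.
From mathcomp Require Import all_boot all_order all_algebra.
From mathcomp Require Import all_classical all_reals all_analysis.
Set Implicit Arguments. Unset Strict Implicit. Unset Printing Implicit Defensive.
Import Order.TTheory GRing.Theory Num.Theory.
Import numFieldNormedType.Exports.
Local Open Scope ring_scope.
Local Open Scope classical_set_scope.

Section Defs.
Context {R : realType} {n : nat}.

Definition mnorm2 (M : 'M[R]_n) (x : 'cV[R]_n) : R := (x^T *m M *m x) 0 0.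

Definition sqnorm (x : 'cV[R]_n) : R := \sum_(i < n) (x i 0) ^+ 2.

Definition symmetric_mx (M : 'M[R]_n) : Prop := M^T = M.

Definition posdef (M : 'M[R]_n) : Prop :=
  forall x : 'cV[R]_n, x != 0 -> 0 < mnorm2 M x.

Definition psd (D : 'M[R]_n) : Prop := forall x : 'cV[R]_n, 0 <= mnorm2 D x.

Definition singular_value (M : 'M[R]_n) (s : R) : Prop :=
  0 <= s /\ eigenvalue (M^T *m M) (s ^+ 2).

Definition sigma_min (M : 'M[R]_n) : R := inf [set s | singular_value M s].

Definition convex_fun (f : 'cV[R]_n -> R) : Prop :=
  forall (x y : 'cV[R]_n) (t : R), 0 <= t <= 1 ->
    f (t *: x + (1 - t) *: y) <= t * f x + (1 - t) * f y.

Definition weakly_convex (L : R) (phi : 'cV[R]_n -> R) : Prop :=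
  convex_fun (fun x => phi x + L / 2 * sqnorm x).

Definition grad (f : 'cV[R]_n -> R) (x : 'cV[R]_n) : 'cV[R]_n :=
  \col_i ('D_(delta_mx i 0) f x).

End Defs.

(* Write v = (θ_i - θ_{i-1})/δ_i and u = (θ_{i-1} - θ_{i-2})/δ_{i-1}.  The
   argument of the M-norm in Ē_i at θ_i is δ_i (v - u), so with
   g = ∇Ē_i(θ_i) - f_i^d,
     δ_i ⟨v, g⟩ = ⟨v, M (v - u)⟩ + δ_i ⟨∇P̄(θ_i), v⟩ + δ_i ⟨v, D v⟩.
   Now 2 ⟨v, M (v - u)⟩ ≥ |v|_M^2 - |u|_M^2, weak convexity gives
   -δ_i ⟨∇P̄(θ_i), v⟩ ≤ P̄(θ_{i-1}) - P̄(θ_i) + L δ_i^2 |v|^2 / 2, D is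
   positive semi-definite, and 2 ⟨v, g⟩ ≤ |v|^2 + |g|^2 ≤ |v|^2 + ε^2.
   Finally |v|^2 ≤ |v|_M^2 / σ_min(M): for symmetric positive definite M the
   minimum of x^T M x on the (compact) unit sphere is attained at an
   eigenvector, and that minimum is the smallest singular value of M. *)

From HB Require Import structures.
From mathcomp Require Import all_boot all_order all_algebra.
From mathcomp Require Import all_classical all_reals all_analysis.
From mathcomp Require Import ring lra.
Import Order.TTheory GRing.Theory Num.Theory.
Import numFieldNormedType.Exports.
Local Open Scope ring_scope.

Section BilinearForm.
Context {R : realType} {n : nat}.
Implicit Types (A B : 'M[R]_n) (x y z : 'cV[R]_n).

Definition mxform A x y : R := (x^T *m A *m y) 0 0.
Definition dot x y : R := (x^T *m y) 0 0.

Lemma mnorm2E A x : mnorm2 A x = mxform A x x.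
Proof. by []. Qed.

Lemma mxformDl A x y z : mxform A (x + y) z = mxform A x z + mxform A y z.
Proof. by rewrite /mxform linearD /= !mulmxDl mxE. Qed.

Lemma mxformDr A x y z : mxform A z (x + y) = mxform A z x + mxform A z y.
Proof. by rewrite /mxform !mulmxDr mxE. Qed.

Lemma mxformZl A k x y : mxform A (k *: x) y = k * mxform A x y.
Proof. by rewrite /mxform linearZ /= -!scalemxAl mxE. Qed.

Lemma mxformZr A k x y : mxform A x (k *: y) = k * mxform A x y.
Proof. by rewrite /mxform -!scalemxAr mxE. Qed.

Lemma mxformBl A x y z : mxform A (x - y) z = mxform A x z - mxform A y z.
Proof. by rewrite mxformDl -scaleN1r mxformZl mulN1r. Qed.

Lemma mxformBr A x y z : mxform A z (x - y) = mxform A z x - mxform A z y.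
Proof. by rewrite mxformDr -scaleN1r mxformZr mulN1r. Qed.

Lemma mxform0l A y : mxform A 0 y = 0.
Proof. by rewrite -(scale0r y) mxformZl mul0r. Qed.

Lemma mxformBmx A B x y : mxform (A - B) x y = mxform A x y - mxform B x y.
Proof. by rewrite /mxform mulmxBr mulmxBl !mxE. Qed.

Lemma mxform_trmx A x y : mxform A x y = mxform A^T y x.
Proof.
have trE (C : 'M[R]_1) : C 0 0 = C^T 0 0 by rewrite mxE.
by rewrite /mxform [LHS]trE !trmx_mul trmxK mulmxA.
Qed.

Lemma mxformC A x y : A^T = A -> mxform A x y = mxform A y x.
Proof. by move=> sA; rewrite mxform_trmx sA. Qed.

Lemma dotE x y : dot x y = mxform 1%:M x y.
Proof. by rewrite /dot /mxform mulmx1. Qed.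

Lemma dotC x y : dot x y = dot y x.
Proof. by rewrite !dotE mxformC // trmx1. Qed.

Lemma mxform_dot A x y : mxform A x y = dot x (A *m y).
Proof. by rewrite /mxform /dot mulmxA. Qed.

Lemma mxform_scalar_mx (k : R) x y : mxform k%:M x y = k * dot x y.
Proof. by rewrite /mxform /dot mul_mx_scalar -scalemxAl mxE. Qed.

Lemma dot_sum x y : dot x y = \sum_k x k 0 * y k 0.
Proof. by rewrite /dot mxE; apply: eq_bigr => k _; rewrite mxE. Qed.

Lemma dot_delta k y : dot (delta_mx k 0) y = y k 0.
Proof. by rewrite /dot trmx_delta -rowE mxE. Qed.

Lemma sqnorm_dot x : sqnorm x = dot x x.
Proof. by rewrite dot_sum /sqnorm; apply: eq_bigr => k _; rewrite expr2. Qed.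

Lemma dot_ge0 x : 0 <= dot x x.
Proof. by rewrite -sqnorm_dot sumr_ge0 // => k _; rewrite sqr_ge0. Qed.

Lemma dot_eq0 x : (dot x x == 0) = (x == 0).
Proof.
apply/idP/eqP => [|->]; last by rewrite dotE mxform0l.
rewrite -sqnorm_dot => /eqP /psumr_eq0P sq_eq0; apply/matrixP => i j.
rewrite (ord1 j) mxE; apply/eqP; rewrite -sqrf_eq0 sq_eq0 // => k _.
exact: sqr_ge0.
Qed.

Lemma dot_gt0 x : x != 0 -> 0 < dot x x.
Proof. by rewrite lt_def dot_eq0 dot_ge0 andbT. Qed.

Lemma dot_mul2_le x y : 2 * dot x y <= dot x x + dot y y.
Proof.
have := dot_ge0 (x - y).
by rewrite !dotE !(mxformBl, mxformBr) -!dotE (dotC y x); lra.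
Qed.

Lemma posdef_ge0 A x : posdef A -> 0 <= mnorm2 A x.
Proof.
move=> pA; have [->|x_neq0] := eqVneq x 0; last exact/ltW/pA.
by rewrite mnorm2E mxform0l.
Qed.

Lemma mxform_sub_le A x y : A^T = A -> posdef A ->
  mxform A x x - mxform A y y <= 2 * mxform A x (x - y).
Proof.
move=> sA pA; have := posdef_ge0 A (x - y) pA.
rewrite mnorm2E !(mxformBl, mxformBr) (mxformC _ y x sA).
lra.
Qed.

End BilinearForm.

Section DirectionalDerivative.
Local Open Scope classical_set_scope.
Context {R : realType} {V : normedModType R}.
Implicit Types (f : V -> R) (x v : V).

Lemma derive_affine_quotient f x v (k d : R) :
  (forall h : R, h != 0 -> h^-1 * (f (h *: v + x) - f x) = k + h * d) ->
  derivable f x v /\ 'D_v f x = k.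
Proof.
move=> fE.
have lin_cvg : (fun h : R => k + h * d) @ 0^' --> k.
  apply: cvg_within_filter.
  have := cvgD (cvg_cst k) (cvgM (@cvg_id _ (nbhs (0 : R))) (cvg_cst d)).
  rewrite mul0r addr0; exact.
have quot_cvg : (fun h : R => h^-1 *: ((f \o shift x) (h *: v) - f x)) @ 0^' --> k.
  apply: cvg_trans lin_cvg; apply: near_eq_cvg; near=> h.
  symmetry; apply: fE; near: h; exact: nbhs_dnbhs_neq.
split; first by apply/cvg_ex; exists k.
exact: cvg_lim.
Unshelve. all: by end_near.
Qed.

Lemma derive_le_quotient f x v (K : R) : derivable f x v ->
  (forall t : R, 0 < t -> t <= 1 -> t^-1 * (f (t *: v + x) - f x) <= K) ->
  'D_v f x <= K.
Proof.
move=> dfv fK.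
have right_le_dnbhs : (0 : R)^'+ `=>` (0 : R)^'.
  move=> A; rewrite /at_right /dnbhs /within /=.
  by apply: filterS => h Ah h0; apply: Ah; rewrite /= gt_eqF.
have quot_cvg := cvg_trans (cvg_fmap2 right_le_dnbhs) (dfv : _ --> 'D_v f x).
apply: (cvgr_to_le quot_cvg); near=> t; apply: fK; near: t.
- exact: nbhs_right_gt.
- exact/nbhs_right_le/ltr01.
Unshelve. all: by end_near.
Qed.

Lemma derive_dirZ f x v (k : R) : differentiable f x ->
  'D_(k *: v) f x = k * 'D_v f x.
Proof. by move=> df; rewrite !deriveE // linearZ. Qed.

End DirectionalDerivative.

Section Gradient.
Context {R : realType} {n : nat}.
Implicit Types (A : 'M[R]_n) (f g : 'cV[R]_n -> R) (a x v w : 'cV[R]_n).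

Lemma derive_mnorm2_shift A (c : R) a x v :
  derivable (fun th => c * mnorm2 A (th + a)) x v /\
  'D_v (fun th => c * mnorm2 A (th + a)) x =
    c * (mxform A v (x + a) + mxform A (x + a) v).
Proof.
apply: (derive_affine_quotient _ _ _ _ (c * mxform A v v)) => h h0.
rewrite !mnorm2E -addrA !(mxformDl, mxformDr, mxformZl, mxformZr).
by field.
Qed.

Lemma gradD f g x :
  (forall k, derivable f x (delta_mx k 0)) ->
  (forall k, derivable g x (delta_mx k 0)) ->
  grad (f \+ g) x = grad f x + grad g x.
Proof.
by move=> df dg; apply/matrixP => k j; rewrite !mxE deriveD.
Qed.

Lemma dot_grad f x w : differentiable f x -> dot w (grad f x) = 'D_w f x.
Proof.
move=> df; have wE : w = \sum_k w k 0 *: delta_mx k 0.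
  apply/matrixP => i j; rewrite (ord1 j) summxE (bigD1 i) //= big1 => [|k ki].
    by rewrite !mxE eqxx mulr1 addr0.
  by rewrite !mxE eq_sym (negbTE ki) mulr0.
rewrite dot_sum deriveE // [in RHS]wE linear_sum; apply: eq_bigr => k _.
by rewrite linearZ mxE deriveE.
Qed.

Lemma grad_mnorm2_shift A (c : R) a x : A^T = A ->
  grad (fun th => c * mnorm2 A (th + a)) x = (2 * c) *: (A *m (x + a)).
Proof.
move=> sA; apply/matrixP => k j; rewrite (ord1 j) !mxE.
rewrite (derive_mnorm2_shift A c a x _).2 (mxformC _ (x + a)) // mxform_dot dot_delta.
by rewrite !mxE; ring.
Qed.

End Gradient.

Section WeakConvexity.
Context {R : realType} {n : nat}.
Variables (L : R) (P : 'cV[R]_n -> R).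
Hypotheses (L_ge0 : 0 <= L) (wcP : weakly_convex L P).

Lemma weakly_convex_quotient_le x w (t : R) : 0 < t -> t <= 1 ->
  t^-1 * (P (t *: w + x) - P x) <= P (w + x) - P x + L / 2 * dot w w.
Proof.
move=> t_gt0 t_le1; rewrite ler_pdivrMl //.
have := wcP (w + x) x t; rewrite ltW //= t_le1 => /(_ isT).
have -> : t *: (w + x) + (1 - t) *: x = t *: w + x.
  by apply/matrixP => i j; rewrite !mxE; ring.
rewrite !sqnorm_dot !dotE !(mxformDl, mxformDr, mxformZl, mxformZr) -!dotE.
rewrite (dotC x w) => convex_ineq.
have : 0 <= L * t * t * dot w w.
  by rewrite !mulr_ge0 ?dot_ge0 // ltW.
nra.
Qed.

Lemma weakly_convex_derive_le x w : differentiable P x ->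
  'D_w P x <= P (w + x) - P x + L / 2 * dot w w.
Proof.
move=> dP; apply: derive_le_quotient; first exact: diff_derivable.
exact: weakly_convex_quotient_le.
Qed.

End WeakConvexity.

Lemma ge0_quadratic_lin_coef_eq0 {R : realFieldType} (a b : R) :
  (forall t, 0 <= t * a + t ^+ 2 * b) -> a = 0.
Proof.
move=> ab; set s := (`|b| + 1)^-1.
have s_gt0 : 0 < s by rewrite invr_gt0 ltr_wpDl.
have sb_lt1 : s * b < 1.
  rewrite (le_lt_trans (ler_wpM2l (ltW s_gt0) (ler_norm b))) //.
  by rewrite mulrC ltr_pdivrMr ?ltr_wpDl // mul1r ltrDl.
have : a ^+ 2 * (s * (1 - s * b)) <= 0.
  have -> : a ^+ 2 * (s * (1 - s * b)) = - (- (a * s) * a + (- (a * s)) ^+ 2 * b).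
    by ring.
  by rewrite oppr_le0 ab.
rewrite pmulr_lle0 ?mulr_gt0 ?subr_gt0 // => a2_le0.
by apply/eqP; rewrite -sqrf_eq0 eq_le a2_le0 sqr_ge0.
Qed.

Section Rayleigh.
Local Open Scope classical_set_scope.
Context {R : realType} {n : nat}.
Implicit Types (M B : 'M[R]_n) (x y : 'cV[R]_n).

Lemma mxform_ge_unit M (lam : R) :
  (forall y, dot y y = 1 -> lam <= mxform M y y) ->
  forall x, lam * dot x x <= mxform M x x.
Proof.
move=> lam_le x; have [->|x_neq0] := eqVneq x 0.
  by rewrite dotE !mxform0l mulr0.
have xx_gt0 := dot_gt0 _ x_neq0; set s := Num.sqrt (dot x x).
have s_gt0 : 0 < s by rewrite sqrtr_gt0.
have ssE : s * s = dot x x by rewrite -expr2 sqr_sqrtr // ltW.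
have := lam_le (s^-1 *: x).
rewrite !dotE !(mxformZl, mxformZr) -!dotE -ssE.
have unitE : s^-1 * (s^-1 * (s * s)) = 1 by field; rewrite gt_eqF.
have scaledE : s^-1 * (s^-1 * mxform M x x) = mxform M x x / (s * s).
  by field; rewrite gt_eqF.
by rewrite unitE scaledE => /(_ erefl); rewrite ler_pdivlMr ?mulr_gt0.
Qed.

Lemma psd_mxform_eq0 B x : B^T = B -> (forall y, 0 <= mxform B y y) ->
  mxform B x x = 0 -> B *m x = 0.
Proof.
move=> sB psdB Bxx; set w := B *m x.
suff /eqP : 2 * dot w w = 0 by rewrite mulf_eq0 pnatr_eq0 dot_eq0 => /eqP.
(* 0 <= (x + t w)^T B (x + t w) = 2 t |w|^2 + t^2 w^T B w for every t. *)
apply: (ge0_quadratic_lin_coef_eq0 _ (mxform B w w)) => t.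
have := psdB (x + t *: w).
rewrite !(mxformDl, mxformDr, mxformZl, mxformZr) Bxx (mxformC _ x w sB).
by rewrite [mxform B w x]mxform_dot -/w; lra.
Qed.

Variable M : 'M[R]_n.
Hypothesis M_sym : M^T = M.

Lemma rayleigh_min_eigen (lam : R) x :
  (forall y, lam * dot y y <= mxform M y y) -> mxform M x x = lam * dot x x ->
  M *m x = lam *: x.
Proof.
move=> lam_le Mxx; apply/eqP; rewrite -subr_eq0 -mul_scalar_mx -mulmxBl.
apply/eqP; apply: psd_mxform_eq0.
- by rewrite linearB /= M_sym tr_scalar_mx.
- by move=> y; rewrite mxformBmx mxform_scalar_mx subr_ge0.
- by rewrite mxformBmx mxform_scalar_mx Mxx subrr.
Qed.

Lemma singular_value_eigen (lam : R) x : 0 <= lam -> x != 0 ->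
  M *m x = lam *: x -> singular_value M lam.
Proof.
move=> lam_ge0 x_neq0 Mx; split => //; apply/eigenvalueP; exists x^T.
  have xM : x^T *m M = lam *: x^T by rewrite -{1}M_sym -trmx_mul Mx linearZ.
  by rewrite M_sym mulmxA xM -scalemxAl xM scalerA.
by apply: contra x_neq0 => /eqP xT0; rewrite -[x]trmxK xT0 trmx0.
Qed.

Lemma singular_value_ge (lam s : R) : 0 <= lam ->
  (forall y, lam * dot y y <= mxform M y y) -> singular_value M s -> lam <= s.
Proof.
move=> lam_ge0 lam_le [s_ge0 /eigenvalueP [v vMM v_neq0]]; set x := v^T.
have x_neq0 : x != 0 by apply: contra v_neq0 => /eqP vT0; rewrite -[v]trmxK -/x vT0 trmx0.
have MMx : M *m (M *m x) = s ^+ 2 *: x.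
  have := congr1 trmx vMM.
  by rewrite trmx_mul trmx_mul trmxK M_sym linearZ -mulmxA.
have MxE : dot (M *m x) (M *m x) = s ^+ 2 * dot x x.
  by rewrite -mxform_dot mxform_trmx M_sym mxform_dot MMx dotE mxformZr -dotE.
have lam2_le : lam ^+ 2 * dot x x <= s ^+ 2 * dot x x.
  have := dot_mul2_le (lam *: x) (M *m x); have := lam_le x.
  rewrite MxE !dotE !(mxformZl, mxformZr) -!dotE -mxform_dot.
  by move=> /(ler_wpM2l lam_ge0); rewrite expr2 -mulrA; lra.
rewrite -(ler_pXn2r (_ : 0 < 2)%N) ?nnegrE //.
by rewrite -(ler_pM2r (dot_gt0 _ x_neq0)).
Qed.

Lemma sigma_min_eigen (lam : R) x : 0 <= lam -> x != 0 ->
  M *m x = lam *: x -> (forall y, lam * dot y y <= mxform M y y) ->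
  sigma_min M = lam.
Proof.
move=> lam_ge0 x_neq0 Mx lam_le.
have lam_sv := singular_value_eigen _ _ lam_ge0 x_neq0 Mx.
have lam_lb : lbound [set s | singular_value M s] lam.
  by move=> s; exact: singular_value_ge.
apply/eqP; rewrite eq_le; apply/andP; split.
- by apply: ge_inf lam_sv; exists lam.
- by apply: lb_le_inf lam_lb; exists lam.
Qed.

End Rayleigh.

Section RowQuadraticForm.
Local Open Scope classical_set_scope.
Context {R : realType} {n : nat}.

Lemma mxform_rV_continuous (A : 'M[R]_n) :
  continuous (fun s : 'rV[R]_n => mxform A s^T s^T).
Proof.
move=> r; apply: differentiable_continuous.
have -> : (fun s : 'rV[R]_n => mxform A s^T s^T) =
    \sum_j ((\sum_i ((fun s : 'rV[R]_n => s ord0 i) * cst (A i j)))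
            * (fun s : 'rV[R]_n => s ord0 j)).
  apply/funext => s; rewrite /mxform fct_sumE mxE; apply: eq_bigr => j _.
  rewrite /= fct_sumE !mxE; congr (_ * _).
  by apply: eq_bigr => i _; rewrite /= !mxE.
apply: differentiable_sum => j; apply: differentiableM; last first.
  exact: differentiable_coord.
apply: differentiable_sum => i; apply: differentiableM.
- exact: differentiable_coord.
- exact: differentiable_cst.
Qed.

End RowQuadraticForm.

Section MinimumOnSphere.
Local Open Scope classical_set_scope.
Context {R : realType} {n : nat}.

(* Compactness of boxes is available for row vectors (rV_compact), so the
   unit sphere is searched among row vectors and transposed back. *)
Lemma exists_mxform_min_sphere (A : 'M[R]_n.+1) : exists2 x : 'cV[R]_n.+1,
  dot x x = 1 & forall y, dot y y = 1 -> mxform A x x <= mxform A y y.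
Proof.
pose S := [set r : 'rV[R]_n.+1 | dot r^T r^T = 1].
have S_neq0 : S !=set0.
  by exists (delta_mx 0 0); rewrite /S /= trmx_delta dot_delta mxE.
have S_closed : closed S.
  rewrite (_ : S = (fun r => mxform 1%:M r^T r^T) @^-1` [set x | x = 1]).
    by apply: preimage_closed => [r _|]; [exact: mxform_rV_continuous | exact: closed_eq].
  by apply/funext => r; rewrite /S /= dotE.
pose B := [set r : 'rV[R]_n.+1 | forall i, `[(-1 : R), 1]%classic (r ord0 i)].
have B_compact : compact B := rV_compact (fun _ => @segment_compact R (-1) 1).
have SB : S `<=` B.
  move=> r; rewrite /S /B /= dot_sum => r1 i.
  have : r ord0 i * r ord0 i <= 1.
    rewrite -r1 (bigD1 i) //= !mxE lerDl sumr_ge0 // => j _.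
    by rewrite !mxE -expr2 sqr_ge0.
  by rewrite in_itv /= => ri; apply/andP; split; nra.
have [c cS c_min] := compact_EVT_min S_neq0 (subclosed_compact S_closed B_compact SB)
  (continuous_subspaceT (mxform_rV_continuous A)).
exists c^T; first by move: cS; rewrite inE.
by move=> y y1; have := c_min y^T; rewrite trmxK; apply; rewrite inE /S /= trmxK.
Qed.

End MinimumOnSphere.

(* The division form also covers n = 0, where sigma_min M is the infimum of
   the empty set. *)
Lemma dot_le_mnorm2_div_sigma_min {R : realType} {n : nat} (M : 'M[R]_n) x :
  symmetric_mx M -> posdef M -> dot x x <= mnorm2 M x / sigma_min M.
Proof.
case: n M x => [|k] M x M_sym M_pd.
  by rewrite dot_sum big_ord0 mnorm2E /mxform mxE big_ord0 mul0r.
have [x0 x0_unit x0_min] := exists_mxform_min_sphere M.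
have x0_neq0 : x0 != 0 by rewrite -dot_eq0 x0_unit oner_neq0.
set lam := mxform M x0 x0.
have lam_gt0 : 0 < lam := M_pd _ x0_neq0.
have lam_le := mxform_ge_unit _ _ x0_min.
have Mx0 : M *m x0 = lam *: x0.
  by apply: rayleigh_min_eigen => //; rewrite x0_unit mulr1.
have -> : sigma_min M = lam.
  by apply: (sigma_min_eigen _ M_sym _ x0) => //; exact: ltW.
by rewrite ler_pdivlMr // mulrC lam_le.
Qed.

Lemma dot_grad_discrete_energy {R : realType} {n : nat} (M D : 'M[R]_n)
    (P : 'cV[R]_n -> R) (d d1 : R) (th0 th1 th2 : 'cV[R]_n) :
  M^T = M -> (forall x, differentiable P x) -> 0 < d -> 0 < d1 ->
  let v := d^-1 *: (th0 - th1) in let u := d1^-1 *: (th1 - th2) in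
  let E := fun th => (2 * d ^+ 2)^-1 *
    mnorm2 M (th - (1 + d / d1) *: th1 + (d / d1) *: th2) + P th in
  d * dot v (grad E th0 + D *m v) =
    mxform M v (v - u) + d * 'D_v P th0 + d * mxform D v v.
Proof.
move=> M_sym dP d_gt0 d1_gt0 v u E.
set a := - ((1 + d / d1) *: th1) + (d / d1) *: th2.
have -> : E = (fun th => (2 * d ^+ 2)^-1 * mnorm2 M (th + a)) \+ P.
  by apply/funext => th; rewrite /E /a /= addrA.
have shiftE : th0 + a = d *: (v - u).
  by apply/matrixP => i j; rewrite !mxE; field; rewrite !gt_eqF.
rewrite gradD => [|k|k]; last 2 first.
- exact: (derive_mnorm2_shift _ _ _ _ _).1.
- exact: diff_derivable.
rewrite dotE 2!mxformDr -!dotE (dot_grad P) // grad_mnorm2_shift // shiftE.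
rewrite -mxform_dot -scalemxAr dotE 2!mxformZr -dotE -mxform_dot.
by field; rewrite gt_eqF.
Qed.

Theorem lemma19 (R : realType) (n : nat) (M : 'M[R]_n)
  (delta_i delta_i1 eps L : R) (Pbar : 'cV[R]_n -> R)
  (D : 'cV[R]_n -> 'cV[R]_n -> 'M[R]_n)
  (theta_i theta_i1 theta_i2 : 'cV[R]_n) :
  symmetric_mx M -> posdef M ->
  0 < delta_i -> 0 < delta_i1 -> 0 <= eps -> 0 <= L ->
  (forall x, differentiable Pbar x) -> weakly_convex L Pbar ->
  psd (D theta_i theta_i1) ->
  let Ebar := fun th : 'cV[R]_n =>
    (2 * delta_i ^+ 2)^-1 *
      mnorm2 M (th - (1 + delta_i / delta_i1) *: theta_i1
                   + (delta_i / delta_i1) *: theta_i2) + Pbar th in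
  let fd := - (D theta_i theta_i1 *m ((delta_i^-1) *: (theta_i - theta_i1))) in
  let Lambda := 2^-1 * sqnorm (grad Ebar theta_i - fd) in
  2 * Lambda <= eps ^+ 2 ->
  (2^-1 * mnorm2 M (delta_i^-1 *: (theta_i - theta_i1)) + Pbar theta_i)
  - (2^-1 * mnorm2 M (delta_i1^-1 *: (theta_i1 - theta_i2)) + Pbar theta_i1)
  <= (L * delta_i ^+ 2 + delta_i) / (2 * sigma_min M)
       * mnorm2 M (delta_i^-1 *: (theta_i - theta_i1))
     + delta_i * eps ^+ 2 / 2.
Proof.
move=> M_sym M_pd d_gt0 d1_gt0 eps_ge0 L_ge0 dP wcP D_psd Ebar fd Lambda Lambda_le.
set v := delta_i^-1 *: (theta_i - theta_i1).
set u := delta_i1^-1 *: (theta_i1 - theta_i2).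
set g := grad Ebar theta_i - fd.
have dot_vg : delta_i * dot v g = mxform M v (v - u) +
    delta_i * 'D_v Pbar theta_i + delta_i * mxform (D theta_i theta_i1) v v.
  by rewrite /g /fd opprK; exact: dot_grad_discrete_energy.
have convexity : - (delta_i * 'D_v Pbar theta_i) <=
    Pbar theta_i1 - Pbar theta_i + L / 2 * (delta_i ^+ 2 * dot v v).
  have step : (- delta_i) *: v + theta_i = theta_i1.
    by rewrite /v scalerA mulNr mulfV ?gt_eqF // scaleN1r opprB subrK.
  have := weakly_convex_derive_le _ _ L_ge0 wcP theta_i ((- delta_i) *: v) (dP _).
  rewrite derive_dirZ // step dotE mxformZl mxformZr -dotE.
  by rewrite expr2; lra.
have energy := mxform_sub_le M v u M_sym M_pd.
have amgm := ler_wpM2l (ltW d_gt0) (dot_mul2_le v g).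
have g_le : delta_i * dot g g <= delta_i * eps ^+ 2.
  apply: ler_wpM2l; first exact: ltW.
  by move: Lambda_le; rewrite /Lambda sqnorm_dot -/g; lra.
have D_ge0 := mulr_ge0 (ltW d_gt0) (D_psd v).
have sigma_bound : (L * delta_i ^+ 2 + delta_i) / 2 * dot v v <=
    (L * delta_i ^+ 2 + delta_i) / (2 * sigma_min M) * mnorm2 M v.
  have -> : (L * delta_i ^+ 2 + delta_i) / (2 * sigma_min M) * mnorm2 M v =
      (L * delta_i ^+ 2 + delta_i) / 2 * (mnorm2 M v / sigma_min M).
    by rewrite invfM; ring.
  apply: ler_wpM2l.
    by rewrite divr_ge0 ?addr_ge0 ?mulr_ge0 ?sqr_ge0 // ltW.
  exact: dot_le_mnorm2_div_sigma_min.
rewrite !mnorm2E in D_ge0 sigma_bound *.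
lra.
Qed.
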